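(* For every $h\in\widehat{\operatorname{PC}^{\bowtie}}$ and every partition $\mathcal P$ associated with $h$, one has $\varepsilon(h)=\varepsilon(h,\mathcal P)$.
   Context: $X=[0,1[$; $\widehat{\operatorname{PC}^{\bowtie}}$ is the group of bijections $X\to X$ continuous outside a finite subset, containing the group ${\mathfrak S}_{\mathrm{fin}}$ of finitely supported permutations with classical signature $\operatorname{sgn}$ valued in $\mathbb{Z}/2\mathbb{Z}$. For $h\in\widehat{\operatorname{PC}^{\bowtie}}$, a partition associated with $h$ is a finite partition $\mathcal P=\{I_1,\dots,I_n\}$ of $X$ into intervals $I_j=[\alpha_j,b_j[$ such that $h$ is continuous on $I_j^\circ=]\alpha_j,b_j[$ for each $j$ (so $h$ is strictly monotone there and $h(I_j^\circ)$ is an open interval). Let $\beta_j$ be the left endpoint of $h(I_j^\circ)$; $\{h(\alpha_j)\}=\{\beta_j\}$, and $\sigma_{(h,\mathcal P)}\in{\mathfrak S}_{\mathrm{fin}}$ sends $h(\alpha_j)$ to $\beta_j$ for each $j$ and fixes all other points. $R(h,\mathcal P)$ is the number of $j$ with $h$ decreasing on $I_j^\circ$, and $\varepsilon(h,\mathcal P)=R(h,\mathcal P)+\operatorname{sgn}(\sigma_{(h,\mathcal P)})\bmod 2$. There is a unique associated partition $\mathcal P^{\min}_h$ with the fewest intervals, every associated partition refines it, and $\varepsilon(h):=\varepsilon(h,\mathcal P^{\min}_h)$. *)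

From HB Require Import structures.
From mathcomp Require Import all_boot all_order all_algebra.
From mathcomp Require Import all_classical all_reals all_analysis.
Set Implicit Arguments. Unset Strict Implicit. Unset Printing Implicit Defensive.
Import Order.TTheory GRing.Theory Num.Theory numFieldNormedType.Exports.
Local Open Scope classical_set_scope.
Local Open Scope ring_scope.

Section PCbowtie.
Variable R : realType.

Definition X : set R := `[0, 1[%classic.

(** h : X -> X (extended arbitrarily outside X) is a bijection of X,
    continuous (for the subspace topology of X) outside a finite subset. *)
Definition in_PCbowtie (h : R -> R) : Prop :=
  set_bij X X h /\
  exists F : set R, finite_set F /\
    forall x, X x -> ~ F x -> (h @ within X (nbhs x) : set_system R) --> h x.

(** A finite partition of X into intervals [a_j, b_j[ is a list of pairs
    (a_j, b_j); it is associated with h when each block is a nonempty interval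
    contained in X, every point of X lies in exactly one block, and h is
    continuous on each open interval ]a_j, b_j[. *)
Definition assoc_partition (h : R -> R) (P : seq (R * R)) : Prop :=
  [/\ forall p, p \in P -> 0 <= p.1 /\ p.1 < p.2 /\ p.2 <= 1,
      forall x, X x -> count (fun p => (p.1 <= x) && (x < p.2)) P = 1%N
    & forall p, p \in P -> forall x, p.1 < x < p.2 -> {for x, continuous h}].

Definition decreasing_on (h : R -> R) (p : R * R) : Prop :=
  forall x y, p.1 < x < p.2 -> p.1 < y < p.2 -> x < y -> h y < h x.

Definition Rdec (h : R -> R) (P : seq (R * R)) : nat :=
  count (fun p => `[< decreasing_on h p >]) P.

Definition beta (h : R -> R) (p : R * R) : R := inf (h @` `]p.1, p.2[%classic).

Definition sigma (h : R -> R) (P : seq (R * R)) (x : R) : R :=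
  let i := find (fun p => h p.1 == x) P in
  if (i < size P)%N then beta h (nth (0, 0) P i) else x.

(** Classical signature (as an element of Z/2Z = bool) of a finitely supported
    permutation s whose support is contained in the duplicate-free list S:
    the parity of the number of inversions of s on S. *)
Definition sgn_on (s : R -> R) (S : seq R) : bool :=
  odd (\sum_(x <- S) \sum_(y <- S) (((x < y)%R && (s y < s x)%R) : nat))%N.

Definition eps (h : R -> R) (P : seq (R * R)) : bool :=
  odd (Rdec h P) (+) sgn_on (sigma h P) [seq h p.1 | p <- P].

Definition min_assoc_partition (h : R -> R) (P : seq (R * R)) : Prop :=
  assoc_partition h P /\ forall Q, assoc_partition h Q -> (size P <= size Q)%N.

End PCbowtie.

From HB Require Import structures.
From mathcomp Require Import all_boot all_order all_algebra.
From mathcomp Require Import all_classical all_reals all_analysis.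
From mathcomp Require Import zify.
Set Implicit Arguments. Unset Strict Implicit. Unset Printing Implicit Defensive.
Import Order.TTheory GRing.Theory Num.Theory numFieldNormedType.Exports.
Local Open Scope classical_set_scope.
Local Open Scope ring_scope.

(* Cutting a block [a, b[ at an interior point c does not change epsilon.  On
   ]a, b[ the bijection h is continuous and injective, hence strictly monotone.
   If h increases there, no new decreasing block appears, beta(a, c) = beta(a, b)
   and beta(c, b) = h c, so sigma only gains the fixed point h c.  If h decreases,
   one more block is decreasing, beta(a, c) = h c and beta(c, b) = beta(a, b), so
   sigma gets composed with the transposition of h a and h c: both summands of
   epsilon change parity.  (sigma really permutes the values h(alpha_j): each
   beta_j is a value of h that h does not attain inside any block, so it is the
   image of a left endpoint.)  A partition is determined by its set of left
   endpoints, so any two associated partitions, in particular P and P^min, have a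
   common refinement reached from each of them by finitely many cuts. *)

Section Inversions.
Context {d : Order.disp_t} {T : orderType d}.
Implicit Types (s : T -> T) (S : seq T).
Local Open Scope order_scope.

Definition inverted s (x y : T) : bool := (x < y) && (s y < s x).

Definition inversions s S : nat :=
  (\sum_(x <- S) \sum_(y <- S) inverted s x y)%N.

Definition inverted_pair s (x y : T) : nat := (inverted s x y + inverted s y x)%N.

Lemma inversions_cons s x S :
  inversions s (x :: S) = (inversions s S + \sum_(y <- S) inverted_pair s x y)%N.
Proof.
rewrite /inversions; under eq_bigr => y _ do rewrite big_cons.
by rewrite big_cons big_split /= /inverted_pair big_split /= {1}/inverted ltxx; lia.
Qed.

Lemma eq_in_inversions s s' S : {in S, s =1 s'} -> inversions s S = inversions s' S.
Proof.
move=> ss'; apply: eq_big_seq => x xS; apply: eq_big_seq => y yS.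
by rewrite /inverted !ss'.
Qed.

Lemma perm_inversions s S S' : perm_eq S S' -> inversions s S = inversions s S'.
Proof.
by move=> pS; rewrite /inversions (perm_big _ pS); apply: eq_bigr => x _; apply: perm_big.
Qed.

Lemma inverted_pairE s x y : x != y -> s x != s y ->
  inverted_pair s x y = ((x < y) != (s x < s y)) :> nat.
Proof.
move=> nxy nsxy; rewrite /inverted_pair /inverted.
by case: ltgtP nxy => // _ _; case: ltgtP nsxy.
Qed.

(* The points of S below y are as many as the points of S sent below y, so the
   points jumping over y upwards and downwards are equinumerous. *)
Lemma count_cross_fixed s y S : perm_eq (map s S) S -> y \notin S ->
  count (fun x => (x < y) && (y < s x)) S = count (fun x => (y < x) && (s x < y)) S.
Proof.
move=> pS yS.
have count_predIC (a b : pred T) :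
    count a S = (count (predI a b) S + count (predI a (predC b)) S)%N.
  by elim: (S) => //= x S' ->; case: (a x); case: (b x) => /=; lia.
have below : count (fun x => x < y) S = count (fun x => s x < y) S.
  by rewrite -(permP pS) count_map.
have := count_predIC (fun x => x < y) (fun x => s x < y).
have := count_predIC (fun x => s x < y) (fun x => x < y).
have -> : count (predI (fun x => s x < y) (fun x => x < y)) S =
          count (predI (fun x => x < y) (fun x => s x < y)) S.
  by apply: eq_count => x /=; rewrite andbC.
have -> : count (predI (fun x => x < y) (predC (fun x => s x < y))) S =
          count (fun x => (x < y) && (y < s x)) S.
  apply: eq_in_count => x xS /=; congr andb.
  have : s x != y by apply: contraNneq yS => <-; rewrite -(perm_mem pS) map_f.
  by rewrite -leNgt lt_neqAle eq_sym => ->.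
have -> : count (predI (fun x => s x < y) (predC (fun x => x < y))) S =
          count (fun x => (y < x) && (s x < y)) S.
  apply: eq_in_count => x xS /=; rewrite andbC; congr andb.
  have : x != y by apply: contraNneq yS => <-.
  by rewrite -leNgt lt_neqAle eq_sym => ->.
move=> split_sx split_x; move: below; rewrite split_x split_sx.
by move/eqP; rewrite eqn_add2l => /eqP.
Qed.

Lemma odd_inversions_cons_fixed s y S : perm_eq (map s S) S -> y \notin S -> s y = y ->
  odd (inversions s (y :: S)) = odd (inversions s S).
Proof.
move=> pS yS sy; rewrite inversions_cons oddD.
have sum_count (a : pred T) : (\sum_(x <- S) a x)%N = count a S.
  by rewrite -sum1_count [RHS]big_mkcond; apply: eq_bigr => x _; case: (a x).
have -> : (\sum_(x <- S) inverted_pair s y x)%N =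
    addn (count (fun x => (y < x) && (s x < y)) S) (count (fun x => (x < y) && (y < s x)) S).
  rewrite -!sum_count -big_split /=; apply: eq_bigr => x _.
  by rewrite /inverted_pair /inverted sy; case: (_ && _); case: (_ && _).
by rewrite count_cross_fixed // addnn odd_double addbF.
Qed.

Lemma odd_inversions_swap s s' u v S : u != v -> u \notin S -> v \notin S ->
  s u != s v -> (forall t, t \in S -> s t != s u /\ s t != s v) ->
  s' u = s v -> s' v = s u -> {in S, s' =1 s} ->
  odd (inversions s' [:: u, v & S]) = ~~ odd (inversions s [:: u, v & S]).
Proof.
move=> nuv uS vS nsuv sS s'u s'v s's.
have pair_uv : odd (inverted_pair s' u v) = ~~ odd (inverted_pair s u v).
  rewrite !inverted_pairE // ?s'u ?s'v 1?eq_sym // !oddb.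
  by move: nsuv; case: ltgtP => //; case: (u < v).
have pairs_S : odd (\sum_(t <- S) (inverted_pair s' v t + inverted_pair s' u t))%N =
               odd (\sum_(t <- S) (inverted_pair s v t + inverted_pair s u t))%N.
  rewrite !(big_morph odd oddD (erefl (odd 0))); apply: eq_big_seq => t tS.
  have ut : u != t by apply: contraNneq uS => ->.
  have vt : v != t by apply: contraNneq vS => ->.
  have [sut svt] := sS t tS.
  rewrite !inverted_pairE ?s'u ?s'v ?s's // 1?eq_sym // !oddD !oddb.
  by case: (u < t); case: (v < t); case: (s u < s t); case: (s v < s t).
have regroup (i a p b : nat) : odd (i + a + (p + b)) = odd i (+) odd (a + b) (+) odd p.
  by rewrite !oddD; case: (odd i); case: (odd a); case: (odd b); case: (odd p).
rewrite !inversions_cons !big_cons (eq_in_inversions s's) 2!regroup -!big_split.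
by rewrite pairs_S pair_uv addbN.
Qed.
End Inversions.

Lemma sgn_on_inversions (R : realType) (s : R -> R) (S : seq R) :
  sgn_on s S = odd (inversions s S).
Proof. by []. Qed.

Section AssocPartition.
Variables (R : realType) (h : R -> R).
Implicit Types (P Q : seq (R * R)) (p q : R * R) (x : R).

Definition in_block x p : bool := (p.1 <= x) && (x < p.2).

Lemma XE x : X x = (0 <= x < 1).
Proof. by rewrite /X /= in_itv. Qed.

Lemma assoc_partition_uniq P : assoc_partition h P -> uniq P.
Proof.
case=> blocks cover _; apply: count_mem_uniq => p.
case: (boolP (p \in P)) => pP; last by apply/count_memPn.
have [p1 [p12 p2]] := blocks p pP.
have : (count_mem p P <= count (in_block p.1) P)%N.
  by apply: sub_count => q /eqP ->; rewrite /in_block lexx p12.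
rewrite cover ?XE ?p1 ?(lt_le_trans p12 p2) //.
have : (0 < count_mem p P)%N by rewrite -has_count has_pred1.
by case: (count_mem p P) => [|[|n]] //.
Qed.

Lemma assoc_partition_bounds P p : assoc_partition h P -> p \in P ->
  [/\ 0 <= p.1, p.1 < p.2 & p.2 <= 1].
Proof. by case=> blocks _ _ /blocks [? [? ?]]. Qed.

Lemma assoc_partition_X P p x : assoc_partition h P -> p \in P -> in_block x p -> X x.
Proof.
move=> A pP /andP[x1 x2]; have [p1 _ p2] := assoc_partition_bounds A pP.
by rewrite XE (le_trans p1 x1) (lt_le_trans x2 p2).
Qed.

Lemma assoc_partition_block_unique P p q x : assoc_partition h P ->
  p \in P -> q \in P -> in_block x p -> in_block x q -> p = q.
Proof.
move=> A pP qP xp xq; apply/eqP; apply: contraT => npq.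
have : (2 <= count (in_block x) P)%N.
  rewrite -size_filter; apply: (uniq_leq_size (s1 := [:: p; q])); first by rewrite /= inE npq.
  by move=> z; rewrite !inE mem_filter => /orP[] /eqP ->; rewrite ?xp ?xq.
by case: (A) => _ cover _; rewrite cover //; apply: assoc_partition_X A pP xp.
Qed.

Lemma assoc_partition_in_block_fst P p : assoc_partition h P -> p \in P -> in_block p.1 p.
Proof. by move=> A /(assoc_partition_bounds A) [_ p12 _]; rewrite /in_block lexx p12. Qed.

Lemma assoc_partition_fst_X P p : assoc_partition h P -> p \in P -> X p.1.
Proof. by move=> A pP; apply: assoc_partition_X A pP (assoc_partition_in_block_fst A pP). Qed.

Lemma assoc_partition_fst_inj P : assoc_partition h P -> {in P &, injective fst}.
Proof.
move=> A p q pP qP pq; apply: (assoc_partition_block_unique (x := p.1) A pP qP).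
  exact: assoc_partition_in_block_fst A pP.
by rewrite pq; apply: assoc_partition_in_block_fst A qP.
Qed.

Lemma assoc_partition_cover P x : assoc_partition h P -> X x ->
  exists2 p, p \in P & in_block x p.
Proof.
by case=> _ cover _ Xx; apply/hasP; rewrite has_count cover.
Qed.

Lemma perm_assoc_partition P Q : perm_eq P Q ->
  assoc_partition h P -> assoc_partition h Q.
Proof.
move=> pPQ [blocks cover cont]; split => [p|x|p]; rewrite -?(perm_mem pPQ).
- exact: blocks.
- by rewrite -(permP pPQ); apply: cover.
- exact: cont.
Qed.

Section Bijective.
Hypothesis hbij : set_bij (@X R) (@X R) h.

Lemma h_X x : X x -> X (h x).
Proof. by case: hbij => hX _ _; apply: hX. Qed.

Lemma h_inj x y : X x -> X y -> h x = h y -> x = y.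
Proof. by case: hbij => _ hinj _ Xx Xy; apply: hinj; rewrite inE. Qed.

Definition left_values P : seq R := [seq h p.1 | p <- P].

Lemma left_values_uniq P : assoc_partition h P -> uniq (left_values P).
Proof.
move=> A; rewrite map_inj_in_uniq ?(assoc_partition_uniq A) // => p q pP qP hpq.
apply: (assoc_partition_fst_inj A pP qP).
by apply: h_inj hpq; apply: assoc_partition_fst_X A _.
Qed.

Lemma sigma_left_value P p : assoc_partition h P -> p \in P ->
  sigma h P (h p.1) = beta h p.
Proof.
move=> A pP; rewrite /sigma; set i := find _ _.
have iP : (i < size P)%N by rewrite -has_find; apply/hasP; exists p.
have hi : h (nth (0, 0) P i).1 == h p.1.
  by apply: (nth_find (0, 0) (a := fun q => h q.1 == h p.1)); apply/hasP; exists p.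
have iPp : nth (0, 0) P i \in P by apply: mem_nth.
rewrite iP (assoc_partition_fst_inj A iPp pP) //.
by apply: h_inj (eqP hi); apply: assoc_partition_fst_X A _.
Qed.

Lemma perm_eps P Q : assoc_partition h P -> perm_eq P Q -> eps h P = eps h Q.
Proof.
move=> A pPQ; have B := perm_assoc_partition pPQ A.
rewrite /eps /Rdec (permP pPQ) !sgn_on_inversions.
rewrite (perm_inversions _ (perm_map (fun p => h p.1) pPQ)).
congr (_ (+) odd _); apply: eq_in_inversions => _ /mapP [q qQ ->].
by rewrite (sigma_left_value A) ?(perm_mem pPQ) // (sigma_left_value B).
Qed.

End Bijective.
End AssocPartition.

Lemma midf_in (F : numFieldType) (a b : F) : a < b -> a < (a + b) / 2 < b.
Proof. by move/midf_lt => [-> ->]. Qed.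

Section Block.
Variables (R : realType) (h : R -> R).
Hypothesis hbij : set_bij (@X R) (@X R) h.
Implicit Types a b c e x y t : R.

Definition cont_block a b : Prop :=
  [/\ 0 <= a, a < b, b <= 1 & forall x, a < x < b -> {for x, continuous h}].

Definition increasing_on (p : R * R) : Prop :=
  forall x y, p.1 < x < p.2 -> p.1 < y < p.2 -> x < y -> h x < h y.

Lemma cont_block_X a b x : cont_block a b -> a < x < b -> X x.
Proof.
case=> a0 _ b1 _ /andP[ax xb].
by rewrite XE (le_trans a0 (ltW ax)) (lt_le_trans xb b1).
Qed.

Lemma cont_block_subl a c b : cont_block a b -> a < c < b -> cont_block a c.
Proof.
case=> a0 ab b1 hc /andP[ac cb]; split => //; first exact: le_trans (ltW cb) b1.
by move=> x /andP[ax xc]; apply: hc; rewrite ax (lt_trans xc cb).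
Qed.

Lemma cont_block_subr a c b : cont_block a b -> a < c < b -> cont_block c b.
Proof.
case=> a0 ab b1 hc /andP[ac cb]; split => //; first exact: le_trans a0 (ltW ac).
by move=> x /andP[cx xb]; apply: hc; rewrite xb (lt_trans ac cx).
Qed.

Lemma cont_block_monotone a b : cont_block a b ->
  increasing_on (a, b) \/ decreasing_on h (a, b).
Proof.
move=> blk; have [_ _ _ hc] := blk.
have C : {within [set` `]a, b[], continuous h}.
  by apply: continuous_in_subspaceT => x; rewrite inE /= in_itv /=; apply: hc.
have I : {in `]a, b[ &, injective h}.
  by move=> x y; rewrite !in_itv /= => xI yI; apply: (h_inj hbij); apply: cont_block_X blk _.
by case: (itv_continuous_inj_mono C I) => mono; [left|right] => x y xI yI xy;
  apply: mono; rewrite ?in_itv /= ?xI ?yI.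
Qed.

Lemma exists_lower_value a b z : cont_block a b -> a < z < b ->
  exists2 z', a < z' < b & h z' < h z.
Proof.
move=> blk zI; have /andP[az zb] := zI.
have [l1 l2] := midf_lt az; have [r1 r2] := midf_lt zb.
have lI : a < (a + z) / 2 < b by rewrite l1 (lt_trans l2).
have rI : a < (z + b) / 2 < b by rewrite r2 (lt_trans az).
by case: (cont_block_monotone blk) => mono; [exists ((a + z) / 2) | exists ((z + b) / 2)];
  rewrite // mono.
Qed.

Lemma exists_higher_value a b z : cont_block a b -> a < z < b ->
  exists2 z', a < z' < b & h z < h z'.
Proof.
move=> blk zI; have /andP[az zb] := zI.
have [l1 l2] := midf_lt az; have [r1 r2] := midf_lt zb.
have lI : a < (a + z) / 2 < b by rewrite l1 (lt_trans l2).
have rI : a < (z + b) / 2 < b by rewrite r2 (lt_trans az).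
by case: (cont_block_monotone blk) => mono; [exists ((z + b) / 2) | exists ((a + z) / 2)];
  rewrite // mono.
Qed.

Lemma block_image_nonempty a b : cont_block a b -> h @` `]a, b[ !=set0.
Proof.
case=> _ ab _ _; exists (h ((a + b) / 2)); exists ((a + b) / 2) => //=.
by rewrite in_itv /= midf_in.
Qed.

Lemma block_image_ge0 a b y : cont_block a b -> (h @` `]a, b[) y -> 0 <= y.
Proof.
move=> blk [x /= xI <-]; rewrite in_itv /= in xI.
by have := h_X hbij (cont_block_X blk xI); rewrite XE => /andP[].
Qed.

Lemma beta_le a b x : cont_block a b -> a < x < b -> beta h (a, b) <= h x.
Proof.
move=> blk xI; apply: ge_inf; last by exists x; rewrite //= in_itv.
by exists 0 => y; apply: block_image_ge0 blk.
Qed.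

Lemma beta_ge0 a b : cont_block a b -> 0 <= beta h (a, b).
Proof.
by move=> blk; apply: lb_le_inf (block_image_nonempty blk) _ => y; apply: block_image_ge0 blk.
Qed.

Lemma beta_adherent a b e : cont_block a b -> 0 < e ->
  exists2 x, a < x < b & h x < beta h (a, b) + e.
Proof.
move=> blk e0.
have hinf : has_inf (h @` `]a, b[).
  by split; [exact: block_image_nonempty | exists 0 => y; apply: block_image_ge0 blk].
by have [_ [x /= xI <-] lt] := inf_adherent e0 hinf; exists x; rewrite ?in_itv in xI.
Qed.

Lemma beta_unique a b m : cont_block a b -> (forall x, a < x < b -> m <= h x) ->
  (forall e, 0 < e -> exists2 x, a < x < b & h x < m + e) -> beta h (a, b) = m.
Proof.
move=> blk lb adh; apply/eqP; rewrite eq_le; apply/andP; split.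
  apply/ler_addgt0Pr => e e0; have [x xI hx] := adh e e0.
  exact: le_trans (beta_le blk xI) (ltW hx).
apply: lb_le_inf; first exact: block_image_nonempty.
by move=> _ [x /= xI <-]; apply: lb; rewrite in_itv in xI.
Qed.

Lemma block_ivt a b x1 x2 t : cont_block a b -> a < x1 < b -> a < x2 < b ->
  h x1 <= t <= h x2 -> exists2 x, a < x < b & h x = t.
Proof.
move=> [_ _ _ hc] /andP[a1 b1] /andP[a2 b2] /andP[t1 t2].
have ivt u v : a < u -> v < b -> u <= v ->
    Num.min (h u) (h v) <= t <= Num.max (h u) (h v) -> exists2 x, a < x < b & h x = t.
  move=> au vb uv tI.
  have C : {within `[u, v], continuous h}.
    apply: continuous_in_subspaceT => x; rewrite inE /= in_itv /= => /andP[ux xv].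
    by apply: hc; rewrite (lt_le_trans au ux) (le_lt_trans xv vb).
  have [c /[!in_itv] /andP[uc cv] hct] := IVT uv C tI.
  by exists c; rewrite // (lt_le_trans au uc) (le_lt_trans cv vb).
by case: (leP x1 x2) => [|/ltW] x12; [apply: ivt x12 _ | apply: ivt x12 _];
  rewrite // ge_min le_max t1 t2 ?orbT.
Qed.

Lemma block_ivt_beta a b t x0 : cont_block a b -> a < x0 < b ->
  beta h (a, b) < t -> t <= h x0 -> exists2 x, a < x < b & h x = t.
Proof.
move=> blk x0I bt tx; have e0 : 0 < t - beta h (a, b) by rewrite subr_gt0.
have [x1 x1I hx1] := beta_adherent blk e0.
by apply: (block_ivt blk x1I x0I); rewrite tx ltW // -(subrKC (beta h (a, b)) t).
Qed.

Lemma continuous_near_lt c e : {for c, continuous h} -> 0 < e ->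
  exists2 d, 0 < d & forall x, `|c - x| < d -> h x < h c + e.
Proof.
move=> hc e0.
have : \forall t \near c, `|h c - h t| < e by exact: cvgr_dist_lt _ _ hc _ e0.
case/nbhs_ballP => d d0 near_c; exists d => // x cx.
by have := near_c x cx; rewrite ltr_distlC => /andP[_].
Qed.

Lemma exists_right_near a b c e : cont_block a b -> a < c < b -> 0 < e ->
  exists2 x, c < x < b & h x < h c + e.
Proof.
move=> [_ _ _ hc] cI e0; have /andP[_ cb] := cI.
have [d d0 near_c] := continuous_near_lt (hc c cI) e0.
have del0 : 0 < Num.min d (b - c) by rewrite lt_min d0 subr_gt0.
have /andP[del2_gt0 del2_lt] := midf_in del0; rewrite add0r in del2_gt0 del2_lt.
have [del_d del_bc] : Num.min d (b - c) <= d /\ Num.min d (b - c) <= b - c.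
  by rewrite !ge_min !lexx orbT.
exists (c + Num.min d (b - c) / 2).
  by rewrite ltrDl del2_gt0 -ltrBrDl (lt_le_trans del2_lt).
by apply: near_c; rewrite opprD addNKr normrN gtr0_norm // (lt_le_trans del2_lt).
Qed.

Lemma exists_left_near a b c e : cont_block a b -> a < c < b -> 0 < e ->
  exists2 x, a < x < c & h x < h c + e.
Proof.
move=> [_ _ _ hc] cI e0; have /andP[ac _] := cI.
have [d d0 near_c] := continuous_near_lt (hc c cI) e0.
have del0 : 0 < Num.min d (c - a) by rewrite lt_min d0 subr_gt0.
have /andP[del2_gt0 del2_lt] := midf_in del0; rewrite add0r in del2_gt0 del2_lt.
have [del_d del_ca] : Num.min d (c - a) <= d /\ Num.min d (c - a) <= c - a.
  by rewrite !ge_min !lexx orbT.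
exists (c - Num.min d (c - a) / 2).
  by rewrite gtrDl oppr_lt0 del2_gt0 andbT ltrBrDl -ltrBrDr (lt_le_trans del2_lt).
by apply: near_c; rewrite opprB addrC subrK gtr0_norm // (lt_le_trans del2_lt).
Qed.

Lemma increasing_on_sub p q : p.1 <= q.1 -> q.2 <= p.2 ->
  increasing_on p -> increasing_on q.
Proof.
move=> pq1 pq2 incr x y /andP[x1 x2] /andP[y1 y2]; apply: incr.
  by rewrite (le_lt_trans pq1 x1) (lt_le_trans x2 pq2).
by rewrite (le_lt_trans pq1 y1) (lt_le_trans y2 pq2).
Qed.

Lemma decreasing_on_sub p q : p.1 <= q.1 -> q.2 <= p.2 ->
  decreasing_on h p -> decreasing_on h q.
Proof.
move=> pq1 pq2 decr x y /andP[x1 x2] /andP[y1 y2]; apply: decr.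
  by rewrite (le_lt_trans pq1 x1) (lt_le_trans x2 pq2).
by rewrite (le_lt_trans pq1 y1) (lt_le_trans y2 pq2).
Qed.

Lemma increasing_on_not_decreasing p : p.1 < p.2 -> increasing_on p -> ~ decreasing_on h p.
Proof.
move=> p12 incr decr; have /andP[m1 m2] := midf_in p12.
have /andP[x1 x2] := midf_in m2; set m := (p.1 + p.2) / 2 in m1 m2 x1 x2.
have mI : p.1 < m < p.2 by rewrite m1.
have xI : p.1 < (m + p.2) / 2 < p.2 by rewrite x2 (lt_trans m1).
by have := lt_trans (incr _ _ mI xI x1) (decr _ _ mI xI x1); rewrite ltxx.
Qed.

Lemma beta_split_increasing a c b : cont_block a b -> a < c < b ->
  increasing_on (a, b) -> beta h (a, c) = beta h (a, b) /\ beta h (c, b) = h c.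
Proof.
move=> blk cI incr; have /andP[ac cb] := cI; have [m1 m2] := midf_lt ac; split.
- apply: (beta_unique (cont_block_subl blk cI)).
    by move=> x /andP[ax xc]; apply: (beta_le blk); rewrite ax (lt_trans xc cb).
  move=> e e0; have [x /andP[ax xb] hx] := beta_adherent blk e0.
  case: (ltP x c) => xc; first by exists x; rewrite ?ax.
  exists ((a + c) / 2); first by rewrite m1 m2.
  apply: lt_trans hx; apply: incr; rewrite /= ?ax ?xb ?m1 //.
    exact: lt_trans m2 cb.
  exact: lt_le_trans m2 xc.
- apply: (beta_unique (cont_block_subr blk cI)).
    by move=> x /andP[cx xb]; apply/ltW/incr; rewrite /= ?ac ?cb ?xb ?(lt_trans ac cx).
  by move=> e; apply: exists_right_near blk cI.
Qed.

Lemma beta_split_decreasing a c b : cont_block a b -> a < c < b ->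
  decreasing_on h (a, b) -> beta h (a, c) = h c /\ beta h (c, b) = beta h (a, b).
Proof.
move=> blk cI decr; have /andP[ac cb] := cI; have [m1 m2] := midf_lt cb; split.
- apply: (beta_unique (cont_block_subl blk cI)); last first.
    by move=> e; apply: exists_left_near blk cI.
  by move=> x /andP[ax xc]; apply/ltW/decr; rewrite /= ?ac ?cb ?ax ?(lt_trans xc cb).
- apply: (beta_unique (cont_block_subr blk cI)).
    by move=> x /andP[cx xb]; apply: (beta_le blk); rewrite xb (lt_trans ac cx).
  move=> e e0; have [x /andP[ax xb] hx] := beta_adherent blk e0.
  case: (ltP c x) => cx; first by exists x; rewrite ?cx.
  exists ((c + b) / 2); first by rewrite m1 m2.
  apply: lt_trans hx; apply: decr; rewrite /= ?ax ?xb ?m2 ?andbT //.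
    exact: lt_trans ac m1.
  exact: le_lt_trans cx m1.
Qed.

End Block.

Section SigmaPermutation.
Variables (R : realType) (h : R -> R).
Hypothesis hbij : set_bij (@X R) (@X R) h.
Implicit Types (P Q : seq (R * R)) (p q : R * R).

Lemma assoc_partition_cont_block P p : assoc_partition h P -> p \in P ->
  cont_block h p.1 p.2.
Proof.
move=> A pP; have [p1 p12 p2] := assoc_partition_bounds A pP.
by split=> //; case: A => _ _ cont; apply: cont.
Qed.

Lemma assoc_partition_image_unique P p q x y : assoc_partition h P -> p \in P -> q \in P ->
  p.1 < x < p.2 -> q.1 < y < q.2 -> h x = h y -> p = q.
Proof.
move=> A pP qP xI yI hxy.
have xy : x = y.
  apply: (h_inj hbij) hxy.
    exact: cont_block_X (assoc_partition_cont_block A pP) xI.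
  exact: cont_block_X (assoc_partition_cont_block A qP) yI.
move: xI yI; rewrite -xy => /andP[x1 x2] /andP[y1 y2].
by apply: (assoc_partition_block_unique (x := x) A pP qP); rewrite /in_block ?ltW.
Qed.

Definition image_covers_right p (m : R) : Prop :=
  exists2 w, m < w & forall t, m < t <= w -> exists2 x, p.1 < x < p.2 & h x = t.

Lemma image_covers_right_beta a b : cont_block h a b ->
  image_covers_right (a, b) (beta h (a, b)).
Proof.
move=> blk; have [_ ab _ _] := blk; have mI := midf_in ab.
have [z zI hz] := exists_lower_value hbij blk mI.
exists (h ((a + b) / 2)); first exact: le_lt_trans (beta_le hbij blk zI) hz.
by move=> t /andP[bt tw]; have := block_ivt_beta hbij blk mI bt tw.
Qed.

Lemma image_covers_right_value p z : cont_block h p.1 p.2 -> p.1 < z < p.2 ->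
  image_covers_right p (h z).
Proof.
move=> blk zI; have [z' z'I hz'] := exists_higher_value hbij blk zI.
exists (h z') => // t /andP[zt tz']; apply: block_ivt blk zI z'I _.
by rewrite (ltW zt).
Qed.

Lemma image_covers_right_unique P p q m : assoc_partition h P -> p \in P -> q \in P ->
  image_covers_right p m -> image_covers_right q m -> p = q.
Proof.
move=> A pP qP [wp mwp covp] [wq mwq covq].
have mw : m < Num.min wp wq by rewrite lt_min mwp.
have /andP[mt /ltW] := midf_in mw; rewrite le_min => /andP[twp twq].
have [x xI hx] := covp _ (introT andP (conj mt twp)).
have [y yI hy] := covq _ (introT andP (conj mt twq)).
by apply: (assoc_partition_image_unique A pP qP xI yI); rewrite hx hy.
Qed.

Lemma beta_inj P : assoc_partition h P -> {in P &, injective (beta h)}.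
Proof.
move=> A [a b] [a' b'] pP qP e; apply: (image_covers_right_unique A pP qP).
  exact: image_covers_right_beta (assoc_partition_cont_block A pP).
by rewrite e; apply: image_covers_right_beta (assoc_partition_cont_block A qP).
Qed.

Lemma beta_mem_left_values P p : assoc_partition h P -> p \in P ->
  beta h p \in left_values h P.
Proof.
case: p => a b A pP; have blk := assoc_partition_cont_block A pP; have [_ ab _ _] := blk.
have Xbeta : X (beta h (a, b)).
  rewrite XE beta_ge0 // (le_lt_trans (beta_le hbij blk (midf_in ab))) //.
  by have := h_X hbij (cont_block_X blk (midf_in ab)); rewrite XE => /andP[].
have [z Xz hz] : exists2 z, X z & h z = beta h (a, b).
  by case: hbij => _ _ /(_ _ Xbeta) [z]; exists z.
have [q qP /andP[q1 q2]] := assoc_partition_cover A Xz.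
case: (eqVneq z q.1) => [zq|zq]; first by rewrite -hz zq map_f.
have zI : q.1 < z < q.2 by rewrite lt_neqAle eq_sym zq q1 q2.
have qp : q = (a, b).
  apply: (image_covers_right_unique A qP pP); last exact: image_covers_right_beta blk.
  by rewrite -hz; apply: image_covers_right_value (assoc_partition_cont_block A qP) zI.
(* so h attains its infimum over ]a, b[ at the interior point z: absurd *)
rewrite qp /= in zI; have [z' z'I hz'] := exists_lower_value hbij blk zI.
by have := beta_le hbij blk z'I; rewrite -hz leNgt hz'.
Qed.

Lemma sigma_perm_left_values P : assoc_partition h P ->
  perm_eq (map (sigma h P) (left_values h P)) (left_values h P).
Proof.
move=> A.
have -> : map (sigma h P) (left_values h P) = map (beta h) P.
  by rewrite -map_comp; apply/eq_in_map => p pP /=; apply: sigma_left_value.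
have uniq_betas : uniq (map (beta h) P).
  by rewrite map_inj_in_uniq ?(assoc_partition_uniq A) //; apply: beta_inj.
have sub : {subset map (beta h) P <= left_values h P}.
  by move=> _ /mapP [p pP ->]; apply: beta_mem_left_values.
apply: uniq_perm; rewrite ?left_values_uniq //.
by apply: (uniq_min_size uniq_betas sub _).2; rewrite !size_map.
Qed.

End SigmaPermutation.

Section SplitBlock.
Variables (R : realType) (h : R -> R) (a c b : R) (P0 : seq (R * R)).
Hypothesis hbij : set_bij (@X R) (@X R) h.
Hypothesis A : assoc_partition h ((a, b) :: P0).
Hypothesis A' : assoc_partition h [:: (a, c), (c, b) & P0].
Hypothesis cI : a < c < b.

Local Notation P := ((a, b) :: P0).
Local Notation P' := [:: (a, c), (c, b) & P0].
Local Notation T := (left_values h P0).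

Let blk_ab : cont_block h a b := assoc_partition_cont_block A (mem_head _ _).

Lemma hc_notin_left_values : h c \notin h a :: T.
Proof.
have := left_values_uniq hbij A'; rewrite /left_values /= inE negb_or.
by case/and3P => /andP[hac _] hcT _; rewrite inE negb_or eq_sym hac.
Qed.

Lemma sigma_split_left_values : {in T, sigma h P' =1 sigma h P}.
Proof.
move=> _ /mapP [q qP ->].
by rewrite (sigma_left_value hbij A') ?(sigma_left_value hbij A) // !inE qP !orbT.
Qed.

Lemma sigma_split_a : sigma h P' (h a) = beta h (a, c).
Proof. by rewrite (sigma_left_value hbij A' (mem_head _ _)). Qed.

Lemma sigma_split_c : sigma h P' (h c) = beta h (c, b).
Proof. by rewrite (sigma_left_value hbij A' (p := (c, b))) // !inE eqxx orbT. Qed.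

Lemma sigma_unsplit_a : sigma h P (h a) = beta h (a, b).
Proof. by rewrite (sigma_left_value hbij A (mem_head _ _)). Qed.

Lemma eps_split_increasing : increasing_on h (a, b) -> eps h P' = eps h P.
Proof.
move=> incr; have /andP[ac cb] := cI.
have [beta_ac beta_cb] := beta_split_increasing hbij blk_ab cI incr.
have not_decr p : a <= p.1 -> p.1 < p.2 -> p.2 <= b -> ~ decreasing_on h p.
  by move=> ap p12 pb; apply: increasing_on_not_decreasing p12 (increasing_on_sub _ _ incr).
have nd_ab : ~ decreasing_on h (a, b) by apply: not_decr; rewrite /= ?lexx ?(lt_trans ac).
have nd_ac : ~ decreasing_on h (a, c) by apply: not_decr; rewrite /= ?lexx ?ltW.
have nd_cb : ~ decreasing_on h (c, b) by apply: not_decr; rewrite /= ?lexx ?ltW.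
rewrite /eps /Rdec /= (asboolF nd_ab) (asboolF nd_ac) (asboolF nd_cb).
have sigma_eq : {in h a :: T, sigma h P' =1 sigma h P}.
  move=> x /[!inE] /orP[/eqP ->|]; last exact: sigma_split_left_values.
  by rewrite sigma_split_a sigma_unsplit_a beta_ac.
rewrite !sgn_on_inversions (perm_inversions _ (permEl (perm_catCA [:: _] [:: _] _))).
rewrite /= odd_inversions_cons_fixed ?(eq_in_inversions sigma_eq) ?hc_notin_left_values //.
  have -> : map (sigma h P') (h a :: T) = map (sigma h P) (h a :: T) by apply/eq_in_map.
  exact: sigma_perm_left_values A.
by rewrite sigma_split_c beta_cb.
Qed.

(* sigma_(h,P') is sigma_(h,P), with h c added as a fixed point, composed with
   the transposition of h a and h c. *)
Lemma eps_split_decreasing : decreasing_on h (a, b) -> eps h P' = eps h P.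
Proof.
move=> decr; have /andP[ac cb] := cI.
have [beta_ac beta_cb] := beta_split_decreasing hbij blk_ab cI decr.
have hcS := hc_notin_left_values; have pS := sigma_perm_left_values hbij A.
have decr_ac : decreasing_on h (a, c) by apply: decreasing_on_sub decr; rewrite /= ?lexx ?ltW.
have decr_cb : decreasing_on h (c, b) by apply: decreasing_on_sub decr; rewrite /= ?lexx ?ltW.
rewrite /eps /Rdec /= (asboolT decr) (asboolT decr_ac) (asboolT decr_cb).
set fixc := fun x => if x == h c then h c else sigma h P x.
have fixcE : {in h a :: T, fixc =1 sigma h P}.
  by move=> x xS; rewrite /fixc; case: eqP => // ex; move: hcS; rewrite -ex xS.
have fixc_a : fixc (h a) = beta h (a, b) by rewrite fixcE ?mem_head ?sigma_unsplit_a.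
have fixc_c : fixc (h c) = h c by rewrite /fixc eqxx.
have swap : odd (inversions (sigma h P') [:: h a, h c & T]) =
            ~~ odd (inversions fixc [:: h a, h c & T]).
  have [hac hcT] : h a != h c /\ h c \notin T.
    by move: hcS; rewrite inE negb_or eq_sym => /andP[].
  have /andP[haT _] : uniq (h a :: T) := left_values_uniq hbij A.
  have /andP[sigma_aT _] : uniq (map (sigma h P) (h a :: T)).
    by rewrite (perm_uniq pS) (left_values_uniq hbij A).
  have sigma_mem x : x \in h a :: T -> sigma h P x \in h a :: T.
    by move=> xS; rewrite -(perm_mem pS) map_f.
  apply: odd_inversions_swap; rewrite ?fixc_a ?fixc_c ?sigma_split_a ?sigma_split_c //.
  - by rewrite -sigma_unsplit_a; apply: contraNneq hcS => <-; rewrite sigma_mem ?mem_head.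
  - move=> t tT; rewrite fixcE ?inE ?tT ?orbT // -sigma_unsplit_a; split.
      by apply: contraNneq sigma_aT => <-; rewrite map_f.
    by apply: contraNneq hcS => <-; rewrite sigma_mem // inE tT orbT.
  - by move=> t tT; rewrite sigma_split_left_values // fixcE // inE tT orbT.
have fixed : odd (inversions fixc [:: h a, h c & T]) = odd (inversions (sigma h P) (h a :: T)).
  rewrite (perm_inversions _ (permEl (perm_catCA [:: _] [:: _] _))) /=.
  rewrite odd_inversions_cons_fixed ?(eq_in_inversions fixcE) //.
  by have -> : map fixc (h a :: T) = map (sigma h P) (h a :: T) by apply/eq_in_map.
rewrite !sgn_on_inversions swap fixed !oddD /=.
by case: (odd (count _ _)); case: (odd (inversions _ _)).
Qed.

Lemma eps_split : eps h P' = eps h P.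
Proof.
by case: (cont_block_monotone hbij blk_ab);
  [apply: eps_split_increasing | apply: eps_split_decreasing].
Qed.

End SplitBlock.

Section Refinement.
Variables (R : realType) (h : R -> R).
Implicit Types (P Q : seq (R * R)) (C : seq R).

Definition cuts P : seq R := [seq p.1 | p <- P].

Lemma assoc_partition_split a c b P0 : assoc_partition h ((a, b) :: P0) -> a < c < b ->
  assoc_partition h [:: (a, c), (c, b) & P0].
Proof.
move=> [blocks cover cont] /andP[ac cb].
have [a0 [_ b1]] := blocks _ (mem_head _ _).
split=> [q|x Xx|q].
- rewrite !inE => /orP[/eqP ->|/orP[/eqP ->|qP]] /=.
  + by rewrite a0 ac (le_trans (ltW cb) b1).
  + by rewrite (le_trans a0 (ltW ac)) cb b1.
  + by apply: blocks; rewrite inE qP orbT.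
- rewrite -(cover x Xx) /= addnA; congr addn.
  case: (ltP x c) => xc /=.
    by rewrite (lt_trans xc cb) andbT addn0.
  by rewrite (le_trans (ltW ac) xc) andbF.
- rewrite !inE => /orP[/eqP ->|/orP[/eqP ->|qP]] x /andP[qx xq].
  + by apply: (cont _ (mem_head _ _)); rewrite /= qx (lt_trans xq cb).
  + by apply: (cont _ (mem_head _ _)); rewrite /= xq (lt_trans ac qx).
  + by apply: (cont q); rewrite ?inE ?qP ?orbT ?qx.
Qed.

Lemma assoc_partition_snd_cut P a b : assoc_partition h P -> (a, b) \in P -> b < 1 ->
  b \in cuts P.
Proof.
move=> A pP b1; have [a0 ab _] := assoc_partition_bounds A pP.
have Xb : X b by rewrite XE (le_trans a0 (ltW ab)) b1.
have [r rP /andP[r1 r2]] := assoc_partition_cover A Xb.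
suff <- : r.1 = b by apply: map_f.
apply/eqP; rewrite eq_le r1 leNgt; apply/negP => rb.
(* otherwise (a, b) and r would share the point max a r.1 *)
have x_ab : in_block (Num.max a r.1) (a, b) by rewrite /in_block le_max lexx gt_max ab rb.
have x_r : in_block (Num.max a r.1) r.
  by rewrite /in_block le_max lexx orbT (lt_trans _ r2) // gt_max ab rb.
by move: r2; rewrite -(assoc_partition_block_unique A pP rP x_ab x_r) ltxx.
Qed.

Lemma cuts_eq_no_inner P Q a b b' : assoc_partition h P -> assoc_partition h Q ->
  cuts P =i cuts Q -> (a, b) \in P -> (a, b') \in Q -> ~ b < b'.
Proof.
move=> A B PQ pP qQ bb'.
have [_ ab _] := assoc_partition_bounds A pP.
have [_ _ b'1] := assoc_partition_bounds B qQ.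
have := assoc_partition_snd_cut A pP (lt_le_trans bb' b'1).
rewrite PQ => /mapP [s sQ bs].
have b_ab' : in_block b (a, b') by rewrite /in_block (ltW ab) bb'.
have b_s : in_block b s by rewrite bs; apply: assoc_partition_in_block_fst B sQ.
have := congr1 fst (assoc_partition_block_unique B qQ sQ b_ab' b_s).
by rewrite /= -bs => eab; move: ab; rewrite eab ltxx.
Qed.

Lemma cuts_eq_perm P Q : assoc_partition h P -> assoc_partition h Q ->
  cuts P =i cuts Q -> perm_eq P Q.
Proof.
have sub P1 Q1 : assoc_partition h P1 -> assoc_partition h Q1 ->
    cuts P1 =i cuts Q1 -> {subset P1 <= Q1}.
  move=> A B PQ [a b] pP; have := map_f fst pP; rewrite PQ => /mapP [[a' b'] qQ /= ea].
  rewrite -ea in qQ; suff -> : b = b' by [].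
  case: (ltgtP b b') => // bb'; first by case: (cuts_eq_no_inner A B PQ pP qQ bb').
  by case: (cuts_eq_no_inner B A (fun x => esym (PQ x)) qQ pP bb').
move=> A B PQ.
apply: uniq_perm; rewrite ?(assoc_partition_uniq A) ?(assoc_partition_uniq B) //.
by move=> p; apply/idP/idP; apply: sub => // x; rewrite PQ.
Qed.

Section Bijective.
Hypothesis hbij : set_bij (@X R) (@X R) h.

Lemma refine_cut P c : assoc_partition h P -> X c ->
  exists P', [/\ assoc_partition h P', cuts P' =i c :: cuts P & eps h P' = eps h P].
Proof.
move=> A Xc; case: (boolP (c \in cuts P)) => cP.
  by exists P; split => // x; rewrite inE; case: eqP => // ->.
have [[a b] pP /andP[/= ac cb]] := assoc_partition_cover A Xc.
have pP0 := perm_to_rem pP; set P0 := rem (a, b) P in pP0.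
have A0 := perm_assoc_partition pP0 A.
have cI : a < c < b.
  rewrite cb lt_neqAle ac !andbT; apply: contraNneq cP => <-.
  exact: (map_f (fun p => p.1) pP).
have A' := assoc_partition_split A0 cI.
exists [:: (a, c), (c, b) & P0]; split => //.
  by move=> x; rewrite /cuts /= !inE (perm_mem (perm_map (fun p => p.1) pP0)) /= !inE orbCA.
by rewrite (eps_split hbij A0 A' cI) (perm_eps hbij A pP0).
Qed.

Lemma refine_cuts P C : assoc_partition h P -> all (fun c => `[< X c >]) C ->
  exists P', [/\ assoc_partition h P', cuts P' =i cuts P ++ C & eps h P' = eps h P].
Proof.
elim: C P => [|c C IH] P A /= XC; first by exists P; split => // x; rewrite cats0.
have /andP[/asboolP Xc {}XC] := XC.
have [P1 [A1 cuts1 eps1]] := refine_cut A Xc.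
have [P2 [A2 cuts2 eps2]] := IH P1 A1 XC.
exists P2; split; rewrite ?eps2 // => x.
by rewrite cuts2 !mem_cat cuts1 !inE orbCA orbA.
Qed.

End Bijective.


End Refinement.

Theorem lemma3p6 (R : realType) (h : R -> R) (Pmin P : seq (R * R)) :
  in_PCbowtie h ->
  min_assoc_partition h Pmin ->
  assoc_partition h P ->
  eps h Pmin = eps h P.
Proof.
move=> [hbij _] [Amin _] A.
have cuts_X Q : assoc_partition h Q -> all (fun c => `[< X c >]) (cuts Q).
  move=> B; apply/allP => _ /mapP [q qQ ->].
  by apply/asboolP; apply: assoc_partition_fst_X B qQ.
have [P1 [A1 cuts1 eps1]] := refine_cuts hbij A (cuts_X _ Amin).
have [P2 [A2 cuts2 eps2]] := refine_cuts hbij Amin (cuts_X _ A).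
have P12 : perm_eq P1 P2.
  by apply: cuts_eq_perm A1 A2 _ => x; rewrite cuts1 cuts2 !mem_cat orbC.
by rewrite -eps1 -eps2 (perm_eps hbij A1 P12).
Qed.
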